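(* Let $V=(J,(V_j)_{j\in J},d,H)$ be a hypergraph system, let $(\nu_e)_{e\in H}$ be a pseudorandom system of measures on $V$, and let $e\in H$. Let $0<\varepsilon<1$ and $0<\sigma<1/2$, let $I\subseteq\mathbb{R}$ be an interval, and let $G:V_e\to I$ be a function. Then, if $N$ is sufficiently large depending on $\varepsilon,\sigma$, there exists a $\sigma$-algebra $\mathcal{B}=\mathcal{B}_{\varepsilon,\sigma,e}(G)$ on $V_e$ with the following properties: (a) for every $\sigma$-algebra $\mathcal{B}'$ on $V_e$, $|G(x)-\mathbb{E}(G\mid\mathcal{B}\vee\mathcal{B}')(x)|\le\varepsilon$ for all $x\in V_e$; (b) $\mathcal{B}$ is generated by at most $O_{\varepsilon,I}(1)$ atoms; (c) for every atom $A$ of $\mathcal{B}$ there is a polynomial $P_A:\mathbb{R}\to\mathbb{R}$ of degree $O_{\varepsilon,\sigma,I}(1)$ with all coefficients $O_{\varepsilon,\sigma,I}(1)$, such that $P_A(y)=O(1)$ for all $y\in I$ and $$\mathbb{E}\big(|1_A(x)-P_A(G(x))|\,(\nu_e(x)+1)\mid x\in V_e\big)=O(\sigma).$$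
   Context: A hypergraph system is a quadruple $V=(J,(V_j)_{j\in J},d,H)$ where $J$ is a finite set, each $V_j$ is a finite nonempty set, $d\ge1$ is an integer and $H\subseteq\binom{J}{d}:=\{e\subseteq J:|e|=d\}$; for $e\subseteq J$ put $V_e:=\prod_{j\in e}V_j$. For a $\sigma$-algebra $\mathcal{B}$ on the finite set $V_e$ and $f:V_e\to\mathbb{R}$, $\mathbb{E}(f\mid\mathcal{B})(x)$ is the uniform average of $f$ over the atom of $\mathcal{B}$ containing $x$; $\mathcal{B}\vee\mathcal{B}'$ is the smallest $\sigma$-algebra containing both. For a finite nonempty set $Z$ and $f:Z\to\mathbb{R}$, $\mathbb{E}(f(x)\mid x\in Z):=|Z|^{-1}\sum_{x\in Z}f(x)$; constraints written after the bar mean uniform averaging over all tuples satisfying them. All objects depend on a parameter $N$ ranging over a sequence tending to infinity while $J,d,H$ are fixed; implicit constants may depend on $J$ (the constants in $O(\cdot)$ are absolute apart from this, and $O_y$ constants depend only on $y$ and $J$, not on $G$ or $N$). $o_{x\to0;y}(X)$ denotes a quantity bounded in magnitude by $c(x,y)X$ where $c(x,y)\to0$ as $x\to0$ for each fixed $y$; $O_y(X)$ a quantity bounded by $C(y)X$. Cube notation: for a finite set $e$, $\{0,1\}^e$ is the set of tuples $\omega=(\omega_j)_{j\in e}$ with $\omega_j\in\{0,1\}$, and $0^e$ is the all-zero tuple; for $x^{(0)}_J,x^{(1)}_J\in V_J$, $e\subseteq J$ and $\omega\in\{0,1\}^e$, set $x^{(\omega)}_e:=(x^{(\omega_j)}_j)_{j\in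 e}\in V_e$ and $x^{(a)}_e:=(x^{(a)}_j)_{j\in e}$ for $a\in\{0,1\}$. A system of measures is a family of functions $\nu_e:V_e\to[0,\infty)$, $e\in H$, with $\mathbb{E}(\nu_e(x_e)\mid x_e\in V_e)=1+o_{N\to\infty}(1)$. For $e\in H$ and $f:V_e\to\mathbb{R}$, $\mathcal{D}_ef(x^{(0)}_e):=\mathbb{E}\big(\prod_{\omega\in\{0,1\}^e,\ \omega\neq 0^e}f(x^{(\omega)}_e)\mid x^{(1)}_e\in V_e\big)$. The system is pseudorandom if: (i) $\mathcal{D}_e(\nu_e+1)(x_e)=O(1)$ for all $e\in H$, $x_e\in V_e$; (ii) for every choice of exponents $n_{e,\omega}\in\{0,1\}$, $\mathbb{E}\big(\prod_{e\in H}\prod_{\omega\in\{0,1\}^e}\nu_e(x^{(\omega)}_e)^{n_{e,\omega}}\mid x^{(0)}_J,x^{(1)}_J\in V_J\big)=1+o_{N\to\infty}(1)$; (iii) for every $e\in H$, $j\in e$, every choice of $n_{e,\omega}\in\{0,1\}$ and every integer $K\ge0$, $\mathbb{E}\Big(\mathbb{E}\big(\prod_{\omega\in\{0,1\}^e}\nu_e(x^{(\omega)}_e)^{n_{e,\omega}}\mid x^{(0)}_j,x^{(1)}_j\in V_j\big)^K\ \Big|\ x^{(0)}_{e\setminus\{j\}},x^{(1)}_{e\setminus\{j\}}\in V_{e\setminus\{j\}}\Big)=O_K(1)$. *)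

From HB Require Import structures.
From mathcomp Require Import all_boot all_order all_algebra.
From mathcomp Require Import reals.
Set Implicit Arguments. Unset Strict Implicit. Unset Printing Implicit Defensive.
Import Order.TTheory GRing.Theory Num.Theory.
Local Open Scope ring_scope.

Section Defs.
Variable R : realType.

Definition avg (T : finType) (f : T -> R) : R :=
  (\sum_(x : T) f x) / #|T|%:R.
Definition avg_on (T : finType) (A : {set T}) (f : T -> R) : R :=
  (\sum_(x in A) f x) / #|A|%:R.

Definition tends_to_one (a : nat -> R) : Prop :=
  forall eta : R, 0 < eta -> exists N0 : nat, forall n, (N0 <= n)%N -> `|a n - 1| <= eta.

Definition sigma_algebra (T : finType) (S : {set {set T}}) : bool :=
  [&& set0 \in S, [forall A in S, ~: A \in S] &
      [forall A in S, forall B in S, A :|: B \in S]].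

Definition is_atom (T : finType) (S : {set {set T}}) (A : {set T}) : bool :=
  [&& A \in S, A != set0 &
      [forall B in S, (B \subset A) ==> ((B == set0) || (B == A))]].
Definition atoms (T : finType) (S : {set {set T}}) : {set {set T}} :=
  [set A in S | is_atom S A].

Definition atom_of (T : finType) (S : {set {set T}}) (x : T) : {set T} :=
  \bigcap_(A in S | x \in A) A.

Definition condE (T : finType) (S : {set {set T}}) (f : T -> R) (x : T) : R :=
  avg_on (atom_of S x) f.

Definition join_sa (T : finType) (S S' : {set {set T}}) : {set {set T}} :=
  \bigcap_(U : {set {set T}} | [&& sigma_algebra U, S \subset U & S' \subset U]) U.

End Defs.

(* The finite nonempty vertex sets V_j (at stage n of the sequence N -> oo)
   are modelled, up to relabelling, by the ordinals 'I_(V n j). *)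
Section Hyp.
Variable J : finType.
Variable V : nat -> J -> nat.

Definition VJ (n : nat) := {dffun forall j : J, 'I_(V n j)}.
Definition Ve (n : nat) (e : {set J}) :=
  {dffun forall j : {i : J | i \in e}, 'I_(V n (sval j))}.

Definition restr (n : nat) (e : {set J}) (x : VJ n) : Ve n e :=
  @finfun _ (fun j : {i : J | i \in e} => 'I_(V n (sval j))) (fun j => x (sval j)).

(* cube points: omega in {0,1}^e is encoded as the subset of e where it is 1 *)
Definition cubeJ (n : nat) (x0 x1 : VJ n) (w : {set J}) : VJ n :=
  @finfun _ (fun j : J => 'I_(V n j)) (fun i => if i \in w then x1 i else x0 i).
Definition cubeE (n : nat) (e : {set J}) (x0 x1 : Ve n e) (w : {set J}) : Ve n e :=
  @finfun _ (fun j : {i : J | i \in e} => 'I_(V n (sval j)))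
    (fun i => if sval i \in w then x1 i else x0 i).
Definition updJ (n : nat) (j : J) (x y : VJ n) : VJ n :=
  @finfun _ (fun j : J => 'I_(V n j)) (fun i => if i == j then y i else x i).
End Hyp.

Definition hypergraph_system (J : finType) (d : nat) (H : {set {set J}}) : Prop :=
  (1 <= d)%N /\ forall e, e \in H -> #|e| = d.

Section Pseudo.
Variable R : realType.
Variable J : finType.
Variable V : nat -> J -> nat.
Variable H : {set {set J}}.
Variable nu : forall (n : nat) (e : {set J}), Ve V n e -> R.

Definition Dop (n : nat) (e : {set J}) (f : Ve V n e -> R) (x0 : Ve V n e) : R :=
  avg (fun x1 : Ve V n e => \prod_(w in powerset e | w != set0) f (cubeE x0 x1 w)).

Definition system_of_measures : Prop :=
  (forall n e x, 0 <= nu (n := n) (e := e) x) /\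
  (forall e, e \in H -> tends_to_one (fun n => avg (@nu n e))).

(* C1 : the O(1) constant of (i); CK K : the O_K(1) constant of (iii) *)
Definition pseudorandom (C1 : R) (CK : nat -> R) : Prop :=
  system_of_measures /\
  (* (i) *)
  (forall n e, e \in H -> forall x : Ve V n e,
      `|Dop (fun y => nu y + 1) x| <= C1) /\
  (* (ii) *)
  (forall ex : {set J} -> {set J} -> bool,
      tends_to_one (fun n =>
        avg (fun p : VJ V n * VJ V n =>
          \prod_(e in H) \prod_(w in powerset e)
             (nu (restr e (cubeJ p.1 p.2 w))) ^+ ex e w))) /\
  (* (iii) *)
  (forall e, e \in H -> forall j, j \in e -> forall ex : {set J} -> bool,
     forall K : nat, forall n,
      `| avg (fun p : VJ V n * VJ V n =>
           (avg (fun q : VJ V n * VJ V n =>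
              \prod_(w in powerset e)
                (nu (restr e (cubeJ (updJ j p.1 q.1) (updJ j p.2 q.2) w))) ^+ ex w))
           ^+ K) | <= CK K).
End Pseudo.

From mathcomp Require Import all_boot all_order all_algebra.
From mathcomp Require Import reals.
From mathcomp Require Import ring lra.
From Stdlib Require Import Classical.
Import Order.TTheory GRing.Theory Num.Theory.
Set Implicit Arguments. Unset Strict Implicit.
Local Open Scope ring_scope.

(* Rescale G to t = (G - a)/span, with values in [0, 1), and cut [0, 1) at one point of each
   slot [k/M, (k+1)/M]: G oscillates by at most eps on each of the M cells, and the cells
   generate B, which gives (a) and (b).  Each cut is chosen among W candidates of its slot whose
   windows are pairwise disjoint, so some candidate carries at most a 1/W share of the mass
   avg (nu + 1), which is at most 3 once N is large; only this first moment of nu is used.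
   The indicator of a cell is a difference of two step functions at consecutive cuts, and
   enough rounds of the smoothstep polynomial 3s^2 - 2s^3 approximate a step to within sig
   outside the window of its cut and to within 1 inside it, whence (c) with C0 = 12. *)

Section Smoothstep.
Variable R : realFieldType.
Implicit Types d s : R.

Definition smoothstep s : R := s * s * (3 - 2 * s).

Lemma smoothstep_in01 s : 0 <= s <= 1 -> 0 <= smoothstep s <= 1.
Proof.
case/andP=> s0 s1; rewrite /smoothstep; apply/andP; split.
  by apply: mulr_ge0; [exact: mulr_ge0 | lra].
have e : 1 - s * s * (3 - 2 * s) = (1 - s) * (1 - s) * (1 + 2 * s) by ring.
have : 0 <= (1 - s) * (1 - s) * (1 + 2 * s) by apply: mulr_ge0; [apply: mulr_ge0|]; lra.
by rewrite -e; lra.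
Qed.

Lemma smoothstep1B s : smoothstep (1 - s) = 1 - smoothstep s.
Proof. by rewrite /smoothstep; ring. Qed.

Lemma smoothstep_le_contract d s : 0 <= d -> 0 <= s <= 1/2 - d ->
  smoothstep s <= (1 - d) * s.
Proof.
move=> d0 /andP[s0 s1]; rewrite /smoothstep -subr_ge0.
have -> : (1 - d) * s - s * s * (3 - 2 * s) =
          s * ((1 - 2 * s - 2 * d) * (1 - s) + d * (1 - 2 * s)) by ring.
by apply: mulr_ge0 => //; apply: addr_ge0; apply: mulr_ge0; lra.
Qed.

Lemma iter_smoothstep_in01 k s : 0 <= s <= 1 -> 0 <= iter k smoothstep s <= 1.
Proof. by move=> hs; elim: k => //= k IH; exact: smoothstep_in01. Qed.

Lemma iter_smoothstep1B k s : iter k smoothstep (1 - s) = 1 - iter k smoothstep s.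
Proof. by elim: k => //= k ->; exact: smoothstep1B. Qed.

Lemma iter_smoothstep_le_expr d k s : 0 <= d -> 0 <= s <= 1/2 - d ->
  iter k smoothstep s <= (1 - d) ^+ k * s.
Proof.
move=> d0 /andP[s0 s1].
suff: 0 <= iter k smoothstep s <= (1 - d) ^+ k * s by case/andP.
elim: k => [|k /andP[u0 u1]] /=; first by rewrite expr0 mul1r lexx s0.
have ek : (1 - d) ^+ k <= 1 by apply: exprn_ile1; lra.
have us : iter k smoothstep s <= s := le_trans u1 (ler_piMl s0 ek).
have hu : 0 <= iter k smoothstep s <= 1/2 - d by rewrite u0 /=; lra.
have hu1 : 0 <= iter k smoothstep s <= 1 by rewrite u0 /=; lra.
have /andP[v0 _] := smoothstep_in01 hu1.
rewrite exprS -mulrA v0 /=; apply: le_trans (smoothstep_le_contract d0 hu) _.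
by apply: ler_wpM2l; lra.
Qed.

Lemma bernoulli_le1 d k : 0 <= d <= 1 -> (1 - d) ^+ k * (1 + k%:R * d) <= 1.
Proof.
case/andP=> d0 d1; elim: k => [|k IH]; first by rewrite expr0 mul0r addr0 mul1r.
have ek0 : 0 <= (1 - d) ^+ k by apply: exprn_ge0; lra.
have step : (1 - d) * (1 + k.+1%:R * d) <= 1 + k%:R * d.
  have : 0 <= k.+1%:R * d * d by rewrite mulr_ge0 // mulr_ge0.
  have -> : (1 - d) * (1 + k.+1%:R * d) = 1 + k%:R * d - k.+1%:R * d * d.
    by rewrite -natr1; ring.
  by lra.
by rewrite exprS -mulrA mulrCA; apply: le_trans IH; exact: ler_wpM2l.
Qed.

End Smoothstep.
Arguments smoothstep {R}.

Section SmoothstepRounds.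
Variable R : archiRealFieldType.

Definition smoothstep_rounds (d sg : R) : nat := (Num.truncn (1 / (sg * d))).+1.

Lemma iter_smoothstep_sharp d sg s : 0 < d <= 1 -> 0 < sg -> 0 <= s <= 1 ->
  let K := smoothstep_rounds d sg in
  (s <= 1/2 - d -> iter K smoothstep s <= sg) /\
  (1/2 + d <= s -> 1 - sg <= iter K smoothstep s).
Proof.
move=> /andP[d0 d1] sg0 hs K.
suff low u : 0 <= u <= 1/2 - d -> iter K smoothstep u <= sg.
  split=> [h|h]; first by apply: low; lra.
  by have := low (1 - s); rewrite iter_smoothstep1B; lra.
move=> hu; have Kd0 : 0 < K%:R * d by rewrite mulr_gt0.
have hKd : 1 < sg * (K%:R * d).
  have : 1 / (sg * d) < K%:R by exact: truncnS_gt.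
  by rewrite ltr_pdivrMr ?mulr_gt0 // mulrCA.
have ek : (1 - d) ^+ K < sg.
  rewrite -(ltr_pM2r Kd0); apply: le_lt_trans hKd.
  apply: le_trans (bernoulli_le1 K (_ : 0 <= d <= 1)); last by rewrite (ltW d0).
  by rewrite ler_wpM2l ?exprn_ge0 ?lerDr //; lra.
apply: le_trans (iter_smoothstep_le_expr K (ltW d0) hu) _.
apply: le_trans (ltW ek); rewrite ler_piMr ?exprn_ge0 //; lra.
Qed.

End SmoothstepRounds.

Section SmoothstepPoly.
Variable R : realFieldType.

Definition smoothstep_poly : {poly R} := 'X * 'X * (3%:P - 2%:P * 'X).

Lemma horner_smoothstep s : smoothstep_poly.[s] = smoothstep s.
Proof. by rewrite /smoothstep_poly /smoothstep !hornerE. Qed.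

Definition iter_smoothstep_poly (K : nat) : {poly R} :=
  iter K (fun p => smoothstep_poly \Po p) 'X.

Lemma horner_iter_smoothstep K s : (iter_smoothstep_poly K).[s] = iter K smoothstep s.
Proof.
elim: K => [|K IH] /=; first by rewrite hornerX.
by rewrite horner_comp -IH horner_smoothstep.
Qed.

End SmoothstepPoly.

Section FiniteFamilies.
Variable R : realFieldType.

Lemma ler_sum_term (I : finType) (F : I -> R) i :
  (forall j, 0 <= F j) -> F i <= \sum_j F j.
Proof. by move=> F0; rewrite (bigD1 i) //= lerDl sumr_ge0. Qed.

Lemma exists_le_mean (W : nat) (F : 'I_W -> R) S :
  (0 < W)%N -> \sum_i F i <= S -> exists i, F i <= S / W%:R.
Proof.
move=> W0 FS; case: (pickP (fun i => F i <= S / W%:R)) => [i Fi | FS']; first by exists i.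
have W0' : (0 : R) < W%:R by rewrite ltr0n.
suff : S < \sum_i F i by rewrite ltNge FS.
apply: le_lt_trans (_ : \sum_(i < W) S / W%:R < _).
  by rewrite sumr_const card_ord -[_ *+ W]mulr_natr divfK ?lt0r_neq0.
apply: ltr_sum => [|i _]; last by rewrite ltNge FS'.
by apply/hasP; exists (Ordinal W0); rewrite ?mem_index_enum.
Qed.

Lemma poly_family_bounded (I : finType) (F : I -> {poly R}) :
  exists (Md : nat) (Mc : R), forall i,
    (size (F i) <= Md.+1)%N /\ forall j, `|(F i)`_j| <= Mc.
Proof.
pose Md := \max_i size (F i).
pose Mc := \sum_i \sum_(j < Md.+1) `|(F i)`_j|.
have Mc_ge i j : (j < Md.+1)%N -> `|(F i)`_j| <= Mc.
  move=> jMd; have Fi0 k : 0 <= \sum_(j < Md.+1) `|(F k)`_j| by exact: sumr_ge0.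
  apply: le_trans (ler_sum_term i Fi0).
  by apply: (ler_sum_term (Ordinal jMd) (F := fun j : 'I_Md.+1 => `|(F i)`_j|)).
exists Md, Mc => i.
have size_le : (size (F i) <= Md.+1)%N by apply: leq_trans (leq_bigmax i) (leqnSn _).
split=> // j; have [/Mc_ge // | Mdj] := ltnP j Md.+1.
by rewrite nth_default ?normr0 ?(le_trans _ (Mc_ge i 0%N _)) // (leq_trans size_le).
Qed.

End FiniteFamilies.

Section Average.
Variables (R : realType) (T : finType).
Implicit Types f g : T -> R.

Lemma ler_avg f g : (forall x, f x <= g x) -> avg f <= avg g.
Proof. by move=> fg; rewrite /avg ler_wpM2r ?invr_ge0 ?ler0n // ler_sum. Qed.

Lemma avgD f g : avg (fun x => f x + g x) = avg f + avg g.
Proof. by rewrite /avg big_split mulrDl. Qed.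

Lemma avgZ c f : avg (fun x => c * f x) = c * avg f.
Proof. by rewrite /avg -mulr_sumr mulrA. Qed.

Lemma avg_cst (x0 : T) (c : R) : avg (fun _ : T => c) = c.
Proof.
have T0 : #|T|%:R != 0 :> R by rewrite pnatr_eq0 -lt0n; apply/card_gt0P; exists x0.
by rewrite /avg sumr_const -[c *+ _]mulr_natr mulfK.
Qed.

End Average.

Section ConditionalExpectation.
Variables (R : realType) (T : finType).

Lemma mem_join_sa (S S' : {set {set T}}) A : A \in S -> A \in join_sa S S'.
Proof. by move=> SA; apply/bigcapP => U /and3P[_ /subsetP SU _]; exact: SU. Qed.

Lemma condE_dist_le (S : {set {set T}}) (f : T -> R) x A eps :
  A \in S -> x \in A -> (forall y, y \in A -> `|f x - f y| <= eps) ->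
  `|f x - condE S f x| <= eps.
Proof.
move=> SA Ax fA; rewrite /condE /avg_on; set Z := atom_of S x.
have Zx : x \in Z by apply/bigcapP => B /andP[].
have ZA : Z \subset A by apply: bigcap_inf; rewrite SA Ax.
have Z0 : (0 : R) < #|Z|%:R by rewrite ltr0n; apply/card_gt0P; exists x.
have -> : f x - (\sum_(y in Z) f y) / #|Z|%:R = (\sum_(y in Z) (f x - f y)) / #|Z|%:R.
  by rewrite sumrB sumr_const mulrBl -[f x *+ _]mulr_natr mulfK ?lt0r_neq0.
rewrite normf_div (gtr0_norm Z0) ler_pdivrMr // mulr_natr -sumr_const.
apply: le_trans (ler_norm_sum _ _ _) _; apply: ler_sum => y Zy.
exact/fA/(subsetP ZA).
Qed.

End ConditionalExpectation.

Section PartitionSigmaAlgebra.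
Variables (T I : finType) (P : I -> {set T}).

Definition partition_sa : {set {set T}} :=
  [set U : {set T} | [forall i, (P i \subset U) || [disjoint P i & U]]].

Lemma sigma_algebra_partition_sa : sigma_algebra partition_sa.
Proof.
apply/and3P; split.
- by rewrite inE; apply/forallP => i; rewrite disjoints_subset setC0 subsetT orbT.
- apply/forallP => U; apply/implyP; rewrite !inE => /forallP PU.
  by apply/forallP => i; move: (PU i); rewrite !disjoints_subset setCK orbC.
- apply/forallP => U; apply/implyP; rewrite inE => /forallP PU.
  apply/forallP => U'; apply/implyP; rewrite !inE => /forallP PU'.
  apply/forallP => i; case/orP: (PU i) => [PiU | PiU].
    by rewrite (subset_trans PiU (subsetUl U U')).
  case/orP: (PU' i) => [PiU' | PiU'].
    by rewrite (subset_trans PiU' (subsetUr U U')).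
  by move: PiU PiU'; rewrite !disjoints_subset setCU subsetI => -> ->; rewrite orbT.
Qed.

Hypotheses (P_cover : forall x, exists i, x \in P i)
  (P_disjoint : forall i j x, x \in P i -> x \in P j -> i = j).

Lemma mem_partition_sa i : P i \in partition_sa.
Proof.
rewrite inE; apply/forallP => j; have [-> | ji] := eqVneq j i; first by rewrite subxx.
apply/orP; right; apply/pred0P => x /=; apply/negP => /andP[Pjx Pix].
by move/eqP: ji; apply; exact: P_disjoint Pjx Pix.
Qed.

Lemma atom_partition_sa A : is_atom partition_sa A -> exists i, A = P i.
Proof.
case/and3P => SA /set0Pn[x Ax] /forallP Amin; have [i Pix] := P_cover x; exists i.
move: SA; rewrite inE => /forallP /(_ i) /orP[PiA | PiA]; last first.
  by move: PiA => /pred0P /(_ x) /=; rewrite Pix Ax.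
have := Amin (P i); rewrite mem_partition_sa PiA /= => /orP[/eqP Pi0 | /eqP -> //].
by move: Pix; rewrite Pi0 inE.
Qed.

Lemma card_atoms_partition_sa : (#|atoms partition_sa| <= #|I|)%N.
Proof.
have : atoms partition_sa \subset P @: I.
  apply/subsetP => A; rewrite inE => /andP[_ /atom_partition_sa [i ->]].
  exact: imset_f.
by move/subset_leq_card/leq_trans; apply; exact: leq_imset_card.
Qed.

End PartitionSigmaAlgebra.

Section Cells.
Variables (R : realType) (T : finType) (t : T -> R) (M : nat) (c : nat -> R).
Hypotheses (M_gt0 : (0 < M)%N) (t_ge0 : forall x, 0 <= t x) (t_lt1 : forall x, t x < 1)
  (c_slot : forall k, k%:R / M%:R <= c k <= k.+1%:R / M%:R).

(* [above k x] says that [t x] lies beyond the k-th cut; the cuts 0 and M are at -oo and +oo *)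
Definition above k x := (k == 0)%N || ((k < M)%N && (c k <= t x)).

Definition cell (k : 'I_M) : {set T} := [set x | above k x && ~~ above k.+1 x].

Lemma cut_le j k : (j < k)%N -> c j <= c k.
Proof.
move=> jk; have /andP[_ cj] := c_slot j; have /andP[ck _] := c_slot k.
apply: le_trans cj (le_trans _ ck).
by rewrite ler_pM2r ?invr_gt0 ?ltr0n // ler_nat.
Qed.

Lemma above_le j k x : (j <= k)%N -> above k x -> above j x.
Proof.
rewrite leq_eqVlt => /orP[/eqP -> // | jk].
rewrite /above; have [-> // | j0] := eqVneq j 0%N.
have k0 : k != 0%N by rewrite -lt0n (leq_ltn_trans _ jk).
rewrite (negbTE k0) => /andP[kM ck]; rewrite (ltn_trans jk kM).
exact: le_trans (cut_le jk) ck.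
Qed.

Lemma cell_cover x : exists k : 'I_M, x \in cell k.
Proof.
have ex0 : exists k, above k x by exists 0%N.
have bound k : above k x -> (k <= M.-1)%N.
  by case/orP=> [/eqP -> // | /andP[kM _]]; rewrite -ltnS prednK.
case: (ex_maxnP ex0 bound) => m am max_m.
have mM : (m < M)%N by rewrite (leq_ltn_trans (bound m am)) // prednK.
exists (Ordinal mM); rewrite inE am /=; apply/negP => /max_m; by rewrite ltnn.
Qed.

Lemma cell_uniq j k x : x \in cell j -> x \in cell k -> j = k.
Proof.
rewrite !inE => /andP[aj naj] /andP[ak nak]; apply: val_inj => /=.
case: (ltngtP j k) => // [jk | kj].
  by move: naj; rewrite (above_le jk ak).
by move: nak; rewrite (above_le kj aj).
Qed.

Lemma cell_indicator (k : 'I_M) x :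
  (x \in cell k)%:R = (above k x)%:R - (above k.+1 x)%:R :> R.
Proof.
rewrite inE; case ak1: (above k.+1 x); last by rewrite andbT subr0.
by rewrite (above_le (leqnSn k) ak1) subrr.
Qed.

Lemma cell_range (k : 'I_M) x : x \in cell k -> k%:R / M%:R <= t x < k.+2%:R / M%:R.
Proof.
rewrite inE /above => /andP[ak nak]; apply/andP; split.
  case/orP: ak => [/eqP -> | /andP[_ ck]]; first by rewrite mul0r.
  by have /andP[+ _] := c_slot k => /le_trans; apply.
move: nak; rewrite negb_and; case: ltnP => /= [kM | Mk].
  by rewrite -ltNge => /lt_le_trans; apply; have /andP[_ ->] := c_slot k.+1.
move=> _; apply: lt_le_trans (t_lt1 x) _.
by rewrite ler_pdivlMr ?ltr0n // mul1r ler_nat; apply: leq_trans Mk _.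
Qed.

Lemma cell_oscillation (k : 'I_M) x y : x \in cell k -> y \in cell k ->
  `|t x - t y| <= 2 / M%:R.
Proof.
move=> /cell_range /andP[x0 x1] /cell_range /andP[y0 y1].
have e : k.+2%:R / M%:R = k%:R / M%:R + 2 / M%:R :> R by rewrite -mulrDl -natrD addn2.
by rewrite e in x1 y1; rewrite ler_norml; apply/andP; split; lra.
Qed.

End Cells.
Arguments cell {R T} t M c k.

Section Candidates.
Variables (R : realFieldType) (M W : nat).
Hypotheses (M_gt0 : (0 < M)%N) (W_gt0 : (0 < W)%N).

(* the k-th slot [k/M, (k+1)/M] holds W candidate cuts with disjoint windows of this radius *)
Definition window_radius : R := 1 / (2 * M%:R * W%:R).

Definition candidate (k i : nat) : R := k%:R / M%:R + (2 * i%:R + 1) * window_radius.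

Lemma window_radius_gt0 : 0 < window_radius.
Proof. by rewrite divr_gt0 // !mulr_gt0 // ltr0n. Qed.

Lemma candidate_slot k (i : 'I_W) :
  k%:R / M%:R + window_radius <= candidate k i <= k.+1%:R / M%:R - window_radius.
Proof.
have r0 := window_radius_gt0.
have slot : k.+1%:R / M%:R = k%:R / M%:R + 2 * W%:R * window_radius :> R.
  rewrite -natr1 mulrDl /window_radius; congr (_ + _).
  by field; rewrite !pnatr_eq0 -!lt0n M_gt0 W_gt0.
have iW : i%:R * window_radius + window_radius <= W%:R * window_radius.
  by rewrite -[X in _ + X <= _]mul1r -mulrDl ler_wpM2r ?(ltW r0) // natr1 ler_nat.
have i0 : 0 <= i%:R * window_radius by rewrite mulr_ge0 ?(ltW r0).
by rewrite /candidate slot; apply/andP; split; lra.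
Qed.

End Candidates.
Arguments window_radius {R}.
Arguments candidate {R}.

Section Windows.
Variables (R : realType) (M W : nat) (T : finType) (t w : T -> R).
Hypotheses (M_gt0 : (0 < M)%N) (W_gt0 : (0 < W)%N) (w_ge0 : forall x, 0 <= w x).

Definition in_window k i x : bool := `|t x - candidate M W k i| < window_radius M W.

Definition window_mass k i : R := avg (fun x => (in_window k i x)%:R * w x).

Lemma in_window_uniq k (i j : 'I_W) x : in_window k i x -> in_window k j x -> i = j.
Proof.
suff sep (i' j' : 'I_W) : (i' < j')%N -> in_window k i' x -> ~~ in_window k j' x.
  move=> wi wj; apply: val_inj; case: (ltngtP i j) => // [ij | ji].
    by move: wj; rewrite (negbTE (sep _ _ ij wi)).
  by move: wi; rewrite (negbTE (sep _ _ ji wj)).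
move=> ij; rewrite /in_window -!leNgt !ltr_norml /candidate => /andP[a1 a2].
have : i'.+1%:R * window_radius M W <= j'%:R * window_radius M W :> R.
  apply: ler_wpM2r; first exact/ltW/window_radius_gt0.
  by rewrite ler_nat.
rewrite -natr1 mulrDl mul1r => ij'.
by rewrite ler_normr; apply/orP; right; lra.
Qed.

Lemma sum_in_window_le1 k x : \sum_(i < W) (in_window k i x)%:R <= 1 :> R.
Proof.
case: (pickP (fun i : 'I_W => in_window k i x)) => [i0 wi0 | none]; last first.
  by rewrite big1 // => i _; rewrite none.
rewrite (bigD1 i0) //= big1 ?wi0 ?addr0 // => i ii0.
by case wi: (in_window k i x); rewrite // (in_window_uniq wi wi0) eqxx in ii0.
Qed.

Lemma sum_window_mass_le k : \sum_(i < W) window_mass k i <= avg w.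
Proof.
rewrite /window_mass /avg -mulr_suml ler_wpM2r ?invr_ge0 ?ler0n //.
rewrite exchange_big /=; apply: ler_sum => x _.
rewrite -mulr_suml ler_piMl //; exact: sum_in_window_le1.
Qed.

Lemma exists_light_windows :
  exists ch : nat -> 'I_W, forall k, window_mass k (ch k) <= avg w / W%:R.
Proof.
pose ch k := odflt (Ordinal W_gt0) [pick i : 'I_W | window_mass k i <= avg w / W%:R].
exists ch => k; rewrite /ch; case: pickP => [i // | none] /=.
have [i wi] := exists_le_mean W_gt0 (sum_window_mass_le k).
by move: (none i); rewrite wi.
Qed.

End Windows.

Section SmoothStepError.
Variables (R : realFieldType) (K : nat) (r sg : R).
Hypotheses (sg_gt0 : 0 < sg) (K_sharp : forall s : R, 0 <= s <= 1 ->
  (s <= 1/2 - r / 2 -> iter K smoothstep s <= sg) /\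
  (1/2 + r / 2 <= s -> 1 - sg <= iter K smoothstep s)).

Lemma smooth_step_error (c s : R) : 0 <= c <= 1 -> 0 <= s <= 1 ->
  `|(c <= s)%R%:R - iter K smoothstep ((s - c) / 2 + 1 / 2)|
    <= sg + (`|s - c| < r)%R%:R.
Proof.
move=> c01 s01; have sg0 := sg_gt0; set u := (s - c) / 2 + 1 / 2.
have u01 : 0 <= u <= 1 by rewrite /u; apply/andP; split; lra.
have /andP[v0 v1] := iter_smoothstep_in01 K u01.
have [lo hi] := K_sharp u01.
rewrite ler_norml; case: ltP => [_ | far] /=.
  by case: (c <= s); rewrite /= ?mulr1n ?mulr0n; apply/andP; split; lra.
rewrite ?mulr0n addr0; have [cs | cs] := lerP c s; rewrite /= ?mulr1n ?mulr0n.
  rewrite ger0_norm ?subr_ge0 // in far.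
  have : 1/2 + r / 2 <= u by rewrite /u; lra.
  by move/hi => h; apply/andP; split; lra.
rewrite ltr0_norm ?subr_lt0 // in far.
have : u <= 1/2 - r / 2 by rewrite /u; lra.
by move/lo => h; apply/andP; split; lra.
Qed.

End SmoothStepError.

Section StepPolynomials.
Variables (R : realFieldType) (M W K : nat).
Hypotheses (M_gt0 : (0 < M)%N) (W_gt0 : (0 < W)%N).

Definition smooth_step k (i : 'I_W) (s : R) : R :=
  if k == 0%N then 1 else if (M <= k)%N then 0
  else iter K smoothstep ((s - candidate M W k i) / 2 + 1 / 2).

Definition step_poly k (i : 'I_W) : {poly R} :=
  if k == 0%N then 1 else if (M <= k)%N then 0
  else iter_smoothstep_poly R K \Po (2^-1 *: ('X - (candidate M W k i)%:P) + 2^-1%:P).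

Lemma horner_step_poly k i s : (step_poly k i).[s] = smooth_step k i s.
Proof.
rewrite /step_poly /smooth_step; case: ifP => _; first by rewrite hornerC.
case: ifP => _; first by rewrite hornerC.
by rewrite horner_comp horner_iter_smoothstep !hornerE; congr (iter _ _ _); field.
Qed.

Lemma candidate_in01 k (i : 'I_W) : (k < M)%N -> 0 <= @candidate R M W k i <= 1.
Proof.
move=> kM; have /andP[c0 c1] := candidate_slot R M_gt0 W_gt0 k i.
have r0 := window_radius_gt0 R M_gt0 W_gt0.
have kM0 : 0 <= k%:R / M%:R :> R by rewrite divr_ge0 ?ler0n.
have kM1 : k.+1%:R / M%:R <= 1 :> R by rewrite ler_pdivrMr ?ltr0n // mul1r ler_nat.
by apply/andP; split; lra.
Qed.

Lemma smooth_step_in01 k i s : 0 <= s <= 1 -> 0 <= smooth_step k i s <= 1.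
Proof.
move=> s01; rewrite /smooth_step; case: ifP => _; first by rewrite ler01 lexx.
case: ifP => kM; first by rewrite lexx ler01.
apply: iter_smoothstep_in01.
have kM' : (k < M)%N by rewrite ltnNge kM.
have /andP[c0 c1] := candidate_in01 i kM'.
by apply/andP; split; lra.
Qed.

Definition cell_poly k (i j : 'I_W) : {poly R} := step_poly k i - step_poly k.+1 j.

Lemma cell_poly_bounded k i j s : 0 <= s <= 1 -> `|(cell_poly k i j).[s]| <= 1.
Proof.
move=> s01; rewrite /cell_poly hornerD hornerN !horner_step_poly.
have /andP[a0 a1] := smooth_step_in01 k i s01.
have /andP[b0 b1] := smooth_step_in01 k.+1 j s01.
by rewrite ler_norml; apply/andP; split; lra.
Qed.

End StepPolynomials.
Arguments smooth_step {R} M W K k i s.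
Arguments step_poly {R} M W K k i.
Arguments cell_poly {R} M W K k i j.

Section CellApproximation.
Variables (R : realType) (M W K : nat) (sg : R) (T : finType) (t w : T -> R) (ch : nat -> 'I_W).
Hypotheses (M_gt0 : (0 < M)%N) (W_gt0 : (0 < W)%N) (sg_gt0 : 0 < sg).
Hypothesis K_sharp : forall s : R, 0 <= s <= 1 ->
  (s <= 1/2 - window_radius M W / 2 -> iter K smoothstep s <= sg) /\
  (1/2 + window_radius M W / 2 <= s -> 1 - sg <= iter K smoothstep s).
Hypotheses (t_ge0 : forall x, 0 <= t x) (t_lt1 : forall x, t x < 1)
  (w_ge0 : forall x, 0 <= w x).

Definition cut k : R := candidate M W k (ch k).

Lemma cut_slot k : k%:R / M%:R <= cut k <= k.+1%:R / M%:R.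
Proof.
have /andP[c0 c1] := candidate_slot R M_gt0 W_gt0 k (ch k).
have r0 := window_radius_gt0 R M_gt0 W_gt0.
by rewrite /cut; apply/andP; split; lra.
Qed.

Lemma above_step_error k x :
  `|(above t M cut k x)%:R - smooth_step M W K k (ch k) (t x)|
    <= sg + (in_window M W t k (ch k) x)%:R.
Proof.
have err0 j : 0 <= sg + (in_window M W t j (ch j) x)%:R.
  by rewrite addr_ge0 ?ler0n ?(ltW sg_gt0).
rewrite /above /smooth_step; have [-> | k0] /= := eqVneq k 0%N.
  by rewrite subrr normr0.
case: (ltnP k M) => [kM | Mk] /=; last by rewrite subrr normr0.
apply: smooth_step_error => //; last by rewrite t_ge0 ltW.
exact: (candidate_in01 R M_gt0 W_gt0).
Qed.

Lemma cell_poly_error (k : 'I_M) :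
  (forall j, window_mass M W t w j (ch j) <= avg w / W%:R) ->
  avg (fun x => `|(x \in cell t M cut k)%:R - (cell_poly M W K k (ch k) (ch k.+1)).[t x]| * w x)
    <= 2 * (sg + 1 / W%:R) * avg w.
Proof.
move=> light.
pose win j x : R := (in_window M W t j (ch j) x)%:R * w x.
have pointwise x :
    `|(x \in cell t M cut k)%:R - (cell_poly M W K k (ch k) (ch k.+1)).[t x]| * w x
    <= 2 * sg * w x + (win k x + win k.+1 x).
  rewrite (cell_indicator t M_gt0 cut_slot) /cell_poly hornerD hornerN !horner_step_poly.
  rewrite (_ : _ - _ - _ = ((above t M cut k x)%:R - smooth_step M W K k (ch k) (t x))
                          - ((above t M cut k.+1 x)%:R - smooth_step M W K k.+1 (ch k.+1) (t x))); last by ring.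
  apply: le_trans (ler_wpM2r (w_ge0 x) (ler_normB _ _)) _.
  have := above_step_error k x; have := above_step_error k.+1 x.
  rewrite /win; have := w_ge0 x; nra.
apply: le_trans (ler_avg pointwise) _; rewrite avgD avgD avgZ.
have -> : 2 * (sg + 1 / W%:R) * avg w = 2 * sg * avg w + 2 * (avg w / W%:R) by ring.
by have := light k; have := light k.+1; rewrite /window_mass; lra.
Qed.
End CellApproximation.
Arguments cut {R} M W ch k.

Section Construction.
Variables (R : realType) (a b eps sig : R).

Definition span : R := `|b - a| + 1.
Definition num_cells : nat := (Num.truncn (2 * span / eps)).+1.
Definition num_candidates : nat := (Num.truncn (1 / sig)).+1.
Definition num_rounds : nat :=
  smoothstep_rounds (window_radius num_cells num_candidates / 2) sig.

Local Notation M := num_cells.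
Local Notation W := num_candidates.

Lemma num_cells_gt0 : (0 < M)%N. Proof. by []. Qed.
Lemma num_candidates_gt0 : (0 < W)%N. Proof. by []. Qed.

Definition rescale : {poly R} := span^-1 *: ('X - a%:P).

Definition atom_poly (p : 'I_M * 'I_W * 'I_W) : {poly R} :=
  cell_poly M W num_rounds p.1.1 p.1.2 p.2 \Po rescale.

Lemma span_gt0 : 0 < span.
Proof. by rewrite /span ltr_pwDr ?normr_ge0. Qed.

Lemma horner_rescale y : rescale.[y] = (y - a) / span.
Proof. by rewrite /rescale !hornerE mulrC. Qed.

Lemma rescale_in01 y : a <= y <= b -> 0 <= (y - a) / span < 1.
Proof.
case/andP=> ay yb; have s0 := span_gt0.
rewrite divr_ge0 ?subr_ge0 ?(ltW s0) //= ltr_pdivrMr // mul1r /span.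
by rewrite ger0_norm; lra.
Qed.

Lemma span_oscillation : 0 < eps -> span * (2 / M%:R) <= eps.
Proof.
move=> eps0; have s0 := span_gt0; have M0 : (0 : R) < M%:R by rewrite ltr0n.
have : 2 * span / eps < M%:R := truncnS_gt _; rewrite ltr_pdivrMr // => h.
by rewrite mulrA ler_pdivrMr //; lra.
Qed.

Lemma num_candidates_inv_lt : 0 < sig -> 1 / W%:R < sig.
Proof.
move=> sig0; have : 1 / sig < W%:R := truncnS_gt _; rewrite ltr_pdivrMr // => h.
by rewrite ltr_pdivrMr ?ltr0n //; lra.
Qed.

Lemma num_rounds_sharp : 0 < sig -> forall s : R, 0 <= s <= 1 ->
  (s <= 1/2 - window_radius M W / 2 -> iter num_rounds smoothstep s <= sig) /\
  (1/2 + window_radius M W / 2 <= s -> 1 - sig <= iter num_rounds smoothstep s).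
Proof.
move=> sig0 s s01; apply: iter_smoothstep_sharp => //.
have r0 : 0 < window_radius M W :> R := window_radius_gt0 R num_cells_gt0 num_candidates_gt0.
have r1 : window_radius M W <= 1 :> R.
  rewrite /window_radius ler_pdivrMr ?mulr_gt0 ?ltr0n // mul1r.
  by rewrite -!natrM ler1n !muln_gt0.
by apply/andP; split; lra.
Qed.

Lemma atom_poly_bounded p y : a <= y <= b -> `|(atom_poly p).[y]| <= 1.
Proof.
move=> yab; rewrite horner_comp horner_rescale; apply: cell_poly_bounded => //.
by have /andP[s0 s1] := rescale_in01 yab; rewrite s0 ltW.
Qed.

Section RescaledCells.
Variables (T : finType) (G w : T -> R).
Hypotheses (G_ab : forall x, a <= G x <= b) (w_ge0 : forall x, 0 <= w x).

Let t x := (G x - a) / span.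
Let cells (ch : nat -> 'I_W) := cell t M (cut M W ch).

Lemma rescaled_ge0 x : 0 <= t x. Proof. by have /andP[] := rescale_in01 (G_ab x). Qed.
Lemma rescaled_lt1 x : t x < 1. Proof. by have /andP[] := rescale_in01 (G_ab x). Qed.

Lemma cells_cover ch x : exists k, x \in cells ch k.
Proof. exact: cell_cover. Qed.

Lemma cells_disjoint ch i j x : x \in cells ch i -> x \in cells ch j -> i = j.
Proof. exact/cell_uniq/cut_slot. Qed.

Lemma cells_condE_dist_le ch B' x : 0 < eps ->
  `|G x - condE (join_sa (partition_sa (cells ch)) B') G x| <= eps.
Proof.
move=> eps0; have [k xk] := cells_cover ch x.
apply: (condE_dist_le (A := cells ch k)) => // [|y yk].
  exact/mem_join_sa/mem_partition_sa/cells_disjoint.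
have -> : G x - G y = span * (t x - t y) by rewrite /t; field; exact: lt0r_neq0 span_gt0.
rewrite normrM gtr0_norm ?span_gt0 //; apply: le_trans (span_oscillation eps0).
rewrite ler_wpM2l ?(ltW span_gt0) //.
by apply: cell_oscillation xk yk => //; [exact: rescaled_ge0 | exact: rescaled_lt1 | exact: cut_slot].
Qed.

Lemma cells_atom_error (ch : nat -> 'I_W) (k : 'I_M) : 0 < sig ->
  (forall j, window_mass M W t w j (ch j) <= avg w / W%:R) ->
  avg (fun x => `|(x \in cells ch k)%:R - (atom_poly (k, ch k, ch k.+1)).[G x]| * w x)
    <= 4 * sig * avg w.
Proof.
move=> sig0 light.
have err := cell_poly_error num_cells_gt0 num_candidates_gt0 sig0 (num_rounds_sharp sig0)
  rescaled_ge0 rescaled_lt1 w_ge0 k light.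
have avg0 : 0 <= avg w by rewrite /avg mulr_ge0 ?invr_ge0 ?ler0n ?sumr_ge0.
have Wsig := num_candidates_inv_lt sig0.
have bound : 2 * (sig + 1 / W%:R) * avg w <= 4 * sig * avg w by rewrite ler_wpM2r //; lra.
apply: le_trans bound; apply: le_trans err; apply: ler_avg => x.
by rewrite horner_comp horner_rescale.
Qed.

Lemma polynomial_partition : 0 < eps -> 0 < sig ->
  exists B : {set {set T}}, [/\ sigma_algebra B,
    forall B' x, `|G x - condE (join_sa B B') G x| <= eps,
    (#|atoms B| <= M)%N &
    forall A, is_atom B A -> exists p,
      avg (fun x => `|(x \in A)%:R - (atom_poly p).[G x]| * w x) <= 4 * sig * avg w].
Proof.
move=> eps0 sig0.
have [ch light] := exists_light_windows t num_cells_gt0 num_candidates_gt0 w_ge0.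
have cover := cells_cover ch; have disj := @cells_disjoint ch.
exists (partition_sa (cells ch)); split.
- exact: sigma_algebra_partition_sa.
- by move=> B' x; apply: cells_condE_dist_le.
- by rewrite (leq_trans (card_atoms_partition_sa cover disj)) ?card_ord.
move=> A /(atom_partition_sa cover disj) [k ->].
by exists (k, ch k, ch k.+1); apply: cells_atom_error.
Qed.

End RescaledCells.

End Construction.
Arguments atom_poly {R} a b eps sig p.

Lemma measure_mass_eventually_le (R : realType) (J : finType) (V : nat -> J -> nat)
    (H : {set {set J}}) (nu : forall n e, Ve V n e -> R) e :
  system_of_measures H nu -> e \in H -> (forall n j, (0 < V n j)%N) ->
  exists N0, forall n, (N0 <= n)%N -> avg (fun x => nu n e x + 1) <= 3.
Proof.
move=> [_ mass1] eH V_gt0; have [N0 N0mass] := mass1 e eH 1 ltr01.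
exists N0 => n nN0; have x0 : Ve V n e := [ffun j => Ordinal (V_gt0 n (sval j))].
have := N0mass n nN0; rewrite avgD (avg_cst x0) ler_norml => /andP[_]; lra.
Qed.

Theorem mainTheorem14 (R : realType) (J : finType) (d : nat) (H : {set {set J}})
    (C1 : R) (CK : nat -> R) :
  exists C0 : R,
  forall (eps : R) (I : interval R),
  exists Mb : nat,
  forall sig : R,
  exists (Md : nat) (Mc : R),
  forall (V : nat -> J -> nat) (nu : forall (n : nat) (e : {set J}), Ve V n e -> R),
    hypergraph_system d H ->
    (forall n j, (0 < V n j)%N) ->
    pseudorandom H nu C1 CK ->
    forall e : {set J}, e \in H ->
    0 < eps < 1 -> 0 < sig < 1 / 2 ->
    (exists a b : R, forall y, y \in I -> a <= y <= b) ->
    exists N0 : nat, forall n : nat, (N0 <= n)%N ->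
    forall G : Ve V n e -> R, (forall x, G x \in I) ->
    exists B : {set {set Ve V n e}},
      sigma_algebra B /\
      (* (a) *)
      (forall B' : {set {set Ve V n e}}, sigma_algebra B' ->
         forall x, `|G x - condE (join_sa B B') G x| <= eps) /\
      (* (b) *)
      (#|atoms B| <= Mb)%N /\
      (* (c) *)
      (forall A : {set Ve V n e}, is_atom B A ->
         exists P : {poly R},
           (size P <= Md.+1)%N /\
           (forall i : nat, `|P`_i| <= Mc) /\
           (forall y, y \in I -> `|P.[y]| <= C0) /\
           avg (fun x : Ve V n e => `|(x \in A)%:R - P.[G x]| * (nu n e x + 1))
             <= C0 * sig).
Proof.
exists 12 => eps I.
have [[a [b I_ab]] | I_unbounded] := classic (exists a b : R, forall y, y \in I -> a <= y <= b);
  last by exists 0%N => sig; exists 0%N, 0 => V nu _ _ _ e _ _ _ /I_unbounded.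
exists (num_cells a b eps) => sig.
have [Md [Mc family]] := poly_family_bounded (atom_poly a b eps sig).
exists Md, Mc => V nu _ V_gt0 [measures _] e eH /andP[eps0 _] /andP[sig0 _] _.
have [N0 mass_le3] := measure_mass_eventually_le measures eH V_gt0.
exists N0 => n nN0 G GI.
have G_ab x : a <= G x <= b by exact/I_ab/GI.
have w_ge0 x : 0 <= nu n e x + 1 by rewrite addr_ge0 ?measures.1.
have [B [Bsa Bclose Bcard Batoms]] := polynomial_partition G_ab w_ge0 eps0 sig0.
exists B; split=> //; split=> [B' _ | ]; first exact: Bclose.
split=> // A /Batoms [p Ap].
have [Psize Pcoef] := family p.
exists (atom_poly a b eps sig p); split=> //; split=> //; split.
  by move=> y /I_ab /atom_poly_bounded /le_trans; apply; rewrite ler1n.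
have sig4 : 0 <= 4 * sig by rewrite mulr_ge0 ?ltW.
by apply: le_trans Ap _; have := ler_wpM2l sig4 (mass_le3 n nN0); lra.
Qed.
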